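(* Let $h_U := \frac{1}{\operatorname{Im}\alpha}\, h$, where $h$ is the hermitian metric on $\mathbb C\times\mathbb H\times\mathbb H$ described in the context. Then for every $s_0\in\mathbb H$ the restriction of $h_U$ to the complex submanifold $\{s=s_0\}=\{(z,\alpha,s_0)\}$ is a Kähler metric, and for every $\alpha_0\in\mathbb H$ the restriction of $h_U$ to the complex submanifold $\{\alpha=\alpha_0\}=\{(z,\alpha_0,s)\}$ is a Kähler metric. Since $h_U$ is invariant under the group $\tilde G$, the same holds on the quotient $(\mathbb C\times\mathbb H\times\mathbb H)/\tilde G$ for the fibers of the two holomorphic maps $\nu$ and $\eta$ induced by $(z,\alpha,s)\mapsto s$ and $(z,\alpha,s)\mapsto \alpha$ respectively.
   Context: $\mathbb H=\{w\in\mathbb C:\operatorname{Im} w>0\}$. On $\mathbb C\times\mathbb H\times\mathbb H$ use holomorphic coordinates $(z,\alpha,s)$. (Here $s$ parametrizes the elliptic curve $X_s=\mathbb C/(\mathbb Z\oplus s\mathbb Z)$ and $\alpha$ parametrizes the complexified Kähler class $\frac{\alpha}{\operatorname{Im} s}\frac{i}{2}dz\wedge d\bar z$ on $X_s$, whose volume is $\operatorname{Im}\alpha$.) Define the functions $g_{\mathcal X/S}=\frac{\alpha-\bar\alpha}{s-\bar s}=\frac{\operatorname{Im}\alpha}{\operatorname{Im}s}$, $g_{L^2}=\frac{i}{2}\frac{1}{\alpha-\bar\alpha}=\frac{1}{4\operatorname{Im}\alpha}$, $g_{WP}=\frac{i}{2}\frac{\alpha-\bar\alpha}{(s-\bar s)^2}=\frac{\operatorname{Im}\alpha}{4(\operatorname{Im}s)^2}$,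 $a=-\frac{z-\bar z}{s-\bar s}=-\frac{\operatorname{Im}z}{\operatorname{Im}s}$. Let $h=\sum_{j,k} h_{j\bar k}\,dw_j\otimes d\bar w_k$ (with $(w_1,w_2,w_3)=(z,\alpha,s)$) be the hermitian metric whose coefficient matrix is $\begin{pmatrix} g_{\mathcal X/S} & 0 & g_{\mathcal X/S}\bar a\\ 0 & g_{L^2} & 0\\ a\, g_{\mathcal X/S} & 0 & g_{WP}+a\, g_{\mathcal X/S}\,\bar a\end{pmatrix}$, i.e. $h=g_{\mathcal X/S}\,|dz+a\,ds|^2+g_{L^2}|d\alpha|^2+g_{WP}|ds|^2$. (This is the pullback of the paper's natural hermitian metric $\omega$ on the fiber product of the universal family of marked elliptic curves with its bundle of complexified Kähler cones.) The group $\tilde G=\{g_{n,m}:(z,\alpha,s)\mapsto(z+n+ms,\alpha,s)\mid n,m\in\mathbb Z\}$ acts freely and properly, and $h$ is $\tilde G$-invariant. A hermitian metric $\sum h_{j\bar k}dw_j\otimes d\bar w_k$ on a complex manifold is Kähler if its associated real $(1,1)$-form $\frac{i}{2}\sum h_{j\bar k}\,dw_j\wedge d\bar w_k$ is closed; restriction to a complex submanifold means restriction of the hermitian form to its tangent vectors. *)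

From Stdlib Require Import Reals Lra ZArith.
Open Scope R_scope.

Record Cx := mkC { Re : R; Im : R }.

Definition C0 : Cx := mkC 0 0.
Definition CR (r : R) : Cx := mkC r 0.
Definition Ci : Cx := mkC 0 1.
Definition Cadd (u v : Cx) : Cx := mkC (Re u + Re v) (Im u + Im v).
Definition Copp (u : Cx) : Cx := mkC (- Re u) (- Im u).
Definition Csub (u v : Cx) : Cx := Cadd u (Copp v).
Definition Cmul (u v : Cx) : Cx :=
  mkC (Re u * Re v - Im u * Im v) (Re u * Im v + Im u * Re v).
Definition Cconj (u : Cx) : Cx := mkC (Re u) (- Im u).
Definition Cinv (u : Cx) : Cx :=
  mkC (Re u / (Re u * Re u + Im u * Im u)) (- Im u / (Re u * Re u + Im u * Im u)).
Definition Cdiv (u v : Cx) : Cx := Cmul u (Cinv v).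

Fixpoint Csum (n : nat) (f : nat -> Cx) : Cx :=
  match n with O => C0 | S m => Cadd (Csum m f) (f m) end.

(** * Points of Cx^n are maps nat -> Cx (only indices < n matter) *)
Definition pt := nat -> Cx.
Definition upd (p : pt) (k : nat) (c : Cx) : pt :=
  fun i => if Nat.eq_dec i k then c else p i.

Definition partial_x (f : pt -> R) (k : nat) (p : pt) (l : R) : Prop :=
  derivable_pt_lim (fun t => f (upd p k (Cadd (p k) (mkC t 0)))) 0 l.
Definition partial_y (f : pt -> R) (k : nat) (p : pt) (l : R) : Prop :=
  derivable_pt_lim (fun t => f (upd p k (Cadd (p k) (mkC 0 t)))) 0 l.

(** Wirtinger derivatives:  d/dw_k = (d/dx_k - i d/dy_k)/2,
    d/dwbar_k = (d/dx_k + i d/dy_k)/2, for f : pt -> Cx. *)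
Definition is_dw (f : pt -> Cx) (k : nat) (p : pt) (v : Cx) : Prop :=
  exists fxr fxi fyr fyi,
    partial_x (fun q => Re (f q)) k p fxr /\ partial_x (fun q => Im (f q)) k p fxi /\
    partial_y (fun q => Re (f q)) k p fyr /\ partial_y (fun q => Im (f q)) k p fyi /\
    v = mkC ((fxr + fyi) / 2) ((fxi - fyr) / 2).
Definition is_dwbar (f : pt -> Cx) (k : nat) (p : pt) (v : Cx) : Prop :=
  exists fxr fxi fyr fyi,
    partial_x (fun q => Re (f q)) k p fxr /\ partial_x (fun q => Im (f q)) k p fxi /\
    partial_y (fun q => Re (f q)) k p fyr /\ partial_y (fun q => Im (f q)) k p fyi /\
    v = mkC ((fxr - fyi) / 2) ((fxi + fyr) / 2).

(** * Hermitian metrics in coordinates.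
    A metric on an open set U of Cx^n is given by its coefficient matrix
    H p j k = h_{j kbar}(p), i.e. h = sum h_{j kbar} dw_j (x) dwbar_k. *)
Definition hermitian_metric (n : nat) (U : pt -> Prop) (H : pt -> nat -> nat -> Cx) : Prop :=
  forall p, U p ->
    (forall j k, (j < n)%nat -> (k < n)%nat -> H p k j = Cconj (H p j k)) /\
    (forall v : pt, (exists j, (j < n)%nat /\ v j <> C0) ->
       0 < Re (Csum n (fun j => Csum n (fun k =>
                 Cmul (Cmul (H p j k) (v j)) (Cconj (v k)))))).

(** The associated (1,1)-form  (i/2) sum h_{j kbar} dw_j /\ dwbar_k  is closed.
    In coordinates, d = del + delbar and the (2,1) and (1,2) components of
    d omega vanish, i.e.
      d h_{j kbar}/dw_l = d h_{l kbar}/dw_j   and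
      d h_{j kbar}/dwbar_l = d h_{j lbar}/dwbar_k. *)
Definition form_closed (n : nat) (U : pt -> Prop) (H : pt -> nat -> nat -> Cx) : Prop :=
  forall p, U p -> forall j k l, (j < n)%nat -> (k < n)%nat -> (l < n)%nat ->
    (exists a b, is_dw (fun q => H q j k) l p a /\ is_dw (fun q => H q l k) j p b /\ a = b) /\
    (exists a b, is_dwbar (fun q => H q j k) l p a /\ is_dwbar (fun q => H q j l) k p b /\ a = b).

Definition kahler_metric (n : nat) (U : pt -> Prop) (H : pt -> nat -> nat -> Cx) : Prop :=
  hermitian_metric n U H /\ form_closed n U H.

Definition cz (p : pt) := p 0%nat.
Definition calpha (p : pt) := p 1%nat.
Definition cs (p : pt) := p 2%nat.

Definition g_XS (p : pt) : Cx :=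
  Cdiv (Csub (calpha p) (Cconj (calpha p))) (Csub (cs p) (Cconj (cs p))).
Definition g_L2 (p : pt) : Cx :=
  Cmul (Cdiv Ci (CR 2)) (Cinv (Csub (calpha p) (Cconj (calpha p)))).
Definition g_WP (p : pt) : Cx :=
  Cmul (Cdiv Ci (CR 2))
       (Cdiv (Csub (calpha p) (Cconj (calpha p)))
             (Cmul (Csub (cs p) (Cconj (cs p))) (Csub (cs p) (Cconj (cs p))))).
Definition a_fn (p : pt) : Cx :=
  Copp (Cdiv (Csub (cz p) (Cconj (cz p))) (Csub (cs p) (Cconj (cs p)))).

Definition hmat (p : pt) (j k : nat) : Cx :=
  match j, k with
  | 0, 0 => g_XS p
  | 0, 2 => Cmul (g_XS p) (Cconj (a_fn p))
  | 1, 1 => g_L2 p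
  | 2, 0 => Cmul (a_fn p) (g_XS p)
  | 2, 2 => Cadd (g_WP p) (Cmul (Cmul (a_fn p) (g_XS p)) (Cconj (a_fn p)))
  | _, _ => C0
  end%nat.

Definition hU (p : pt) (j k : nat) : Cx := Cmul (CR (/ Im (calpha p))) (hmat p j k).

Definition Dom3 (p : pt) : Prop := 0 < Im (calpha p) /\ 0 < Im (cs p).

(** Since the inclusions are coordinate inclusions, restricting the hermitian
    form to tangent vectors gives the corresponding 2x2 submatrix. *)
Definition emb_s (s0 : Cx) (q : pt) : pt :=
  fun i => match i with 0 => q 0%nat | 1 => q 1%nat | _ => s0 end.
Definition emb_alpha (a0 : Cx) (q : pt) : pt :=
  fun i => match i with 0 => q 0%nat | 1 => a0 | _ => q 1%nat end.
Definition idx_s (j : nat) : nat := j.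
Definition idx_alpha (j : nat) : nat :=
  match j with 0 => 0 | _ => 2 end%nat.

Definition restr_s (H : pt -> nat -> nat -> Cx) (s0 : Cx) : pt -> nat -> nat -> Cx :=
  fun q j k => H (emb_s s0 q) (idx_s j) (idx_s k).
Definition restr_alpha (H : pt -> nat -> nat -> Cx) (a0 : Cx) : pt -> nat -> nat -> Cx :=
  fun q j k => H (emb_alpha a0 q) (idx_alpha j) (idx_alpha k).

Definition Dom2 (q : pt) : Prop := 0 < Im (q 1%nat).

Definition gact (n m : Z) (p : pt) : pt :=
  fun i => match i with
           | 0 => Cadd (p 0%nat) (Cadd (CR (IZR n)) (Cmul (CR (IZR m)) (p 2%nat)))
           | _ => p i end.
(** holomorphic Jacobian  J_{a j} = d (g_{n,m})_a / d w_j *)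
Definition gjac (m : Z) (a j : nat) : Cx :=
  match a, j with
  | 0, 0 | 1, 1 | 2, 2 => CR 1
  | 0, 2 => CR (IZR m)
  | _, _ => C0
  end%nat.
Definition pullback_g (n m : Z) (H : pt -> nat -> nat -> Cx) (p : pt) (j k : nat) : Cx :=
  Csum 3 (fun a => Csum 3 (fun b =>
    Cmul (Cmul (H (gact n m p) a b) (gjac m a j)) (Cconj (gjac m b k)))).

(** On C x H x H every coefficient of h_U is a REAL rational function
    of the three imaginary parts y = Im z, a = Im alpha, b = Im s only
    ([hU_explicit]).  Invariance is then a direct computation: g_{n,m} shifts
    y by m*b, and the Jacobian correction exactly compensates this shift.
    For the slices we prove one general criterion ([slice_kahler]): a 2x2
    coefficient matrix on C x H which is real, symmetric, depends only on the
    imaginary parts (y, b) of the two coordinates, is positive definite, and whose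
    partial derivatives D_l e_{jk} are symmetric in (l, j), is a Kähler metric.
    Indeed, for such a matrix the Wirtinger derivatives are d/dw_l = -(i/2) D_l
    and d/dwbar_l = (i/2) D_l ([wirtinger_imag_only]), so both closedness
    conditions reduce to the symmetry of D, and positivity of the hermitian form
    is the positive definiteness of a real 2x2 matrix ([posdef_real_2x2]). *)
From Coquelicot Require Import Coquelicot.
From Stdlib Require Import Reals ZArith Lra Lia.
Open Scope R_scope.

Definition hU_entry (j k : nat) (y a b : R) : R :=
  match j, k with
  | O, O => / b
  | O, S (S O) => - y / (b * b)
  | S (S O), O => - y / (b * b)
  | S O, S O => / (4 * (a * a))
  | S (S O), S (S O) => / (4 * (b * b)) + y * y / (b * b * b)
  | _, _ => 0
  end.

Lemma hU_explicit (p : pt) (j k : nat) : Dom3 p ->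
  hU p j k = mkC (hU_entry j k (Im (p 0%nat)) (Im (p 1%nat)) (Im (p 2%nat))) 0.
Proof.
  unfold Dom3, hU, hmat, g_XS, g_L2, g_WP, a_fn, cz, calpha, cs.
  destruct (p 0%nat) as [x y], (p 1%nat) as [a1 a2], (p 2%nat) as [b1 b2].
  cbn [Re Im]; intros [Ha Hb].
  destruct j as [|[|[|j]]], k as [|[|[|k]]];
    unfold Cmul, Cadd, Copp, Cconj, Cdiv, Cinv, CR, Ci, C0, Csub; simpl; f_equal;
    try (replace (b1 + - b1) with 0 by ring); try (replace (a1 + - a1) with 0 by ring);
    try (replace (x + - x) with 0 by ring);
    try (replace (b2 + - - b2) with (2 * b2) by ring);
    try (replace (a2 + - - a2) with (2 * a2) by ring);
    try (replace (y + - - y) with (2 * y) by ring);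
    try field; repeat split; try (intro; nra).
Qed.

(** The group action preserves the domain and is a symmetry of h_U: the shift
    y -> y + m b of Im z is compensated by the Jacobian term m ds in dz. *)
Lemma hU_lattice_invariant (n m : Z) (p : pt) : Dom3 p ->
  Dom3 (gact n m p) /\
  forall j k, (j < 3)%nat -> (k < 3)%nat -> pullback_g n m hU p j k = hU p j k.
Proof.
  intros Hp.
  assert (Hg : Dom3 (gact n m p)) by (unfold Dom3, calpha, cs, gact in *; exact Hp).
  split; [exact Hg|].
  intros j k Hj Hk. unfold pullback_g. cbn [Csum].
  rewrite !(hU_explicit (gact n m p)), (hU_explicit p) by assumption.
  unfold Dom3, calpha, cs in Hp. destruct Hp as [Ha Hb].
  unfold gact; cbn [Im Re].
  destruct (p 0%nat) as [x y], (p 1%nat) as [a1 a2], (p 2%nat) as [b1 b2].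
  cbn [Im Re] in *.
  destruct j as [|[|[|j]]], k as [|[|[|k]]]; try lia;
    unfold gjac, hU_entry, Cmul, Cadd, Copp, Cconj, CR, C0; cbn [Re Im]; f_equal;
    field; lra.
Qed.

(** Constants have derivative 0 (Coquelicot's version states it with [zero]). *)
Lemma is_derive_const_R (c x : R) : is_derive (fun _ => c) x 0.
Proof. apply is_derive_Reals, derivable_pt_lim_const. Qed.

Section ImaginaryPartsOnly.
Variable f : pt -> R.
Variable h : R -> R -> R.
Hypothesis f_imag : forall q, Dom2 q -> f q = h (Im (q 0%nat)) (Im (q 1%nat)).

(** Moving a real part changes nothing, so every d/dx_k vanishes. *)
Lemma partial_x_imag_only (k : nat) (p : pt) : Dom2 p -> partial_x f k p 0.
Proof.
  intros Hp. unfold partial_x. apply is_derive_Reals.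
  apply is_derive_ext with (f := fun _ => h (Im (p 0%nat)) (Im (p 1%nat))).
  - intros t. unfold Dom2 in *.
    assert (Hupd : forall i, Im (upd p k (Cadd (p k) (mkC t 0)) i) = Im (p i)).
    { intros i. unfold upd. destruct (Nat.eq_dec i k) as [->|]; cbn; [ring|reflexivity]. }
    rewrite f_imag; [rewrite !Hupd; reflexivity | unfold Dom2; rewrite Hupd; exact Hp].
  - apply is_derive_const_R.
Qed.

Lemma partial_y0_imag_only (p : pt) (d : R) : Dom2 p ->
  is_derive (fun t => h (Im (p 0%nat) + t) (Im (p 1%nat))) 0 d -> partial_y f 0 p d.
Proof.
  intros Hp Hd. unfold partial_y. apply is_derive_Reals.
  eapply is_derive_ext; [|exact Hd].
  intros t. rewrite f_imag; unfold upd, Dom2 in *; cbn; [f_equal; ring | exact Hp].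
Qed.

(** d/dy_1 is the second partial derivative of h; here only points near p stay
    in the half plane, so the identification is local. *)
Lemma partial_y1_imag_only (p : pt) (d : R) : Dom2 p ->
  is_derive (fun t => h (Im (p 0%nat)) (Im (p 1%nat) + t)) 0 d -> partial_y f 1 p d.
Proof.
  intros Hp Hd. unfold partial_y. apply is_derive_Reals.
  eapply is_derive_ext_loc; [|exact Hd].
  apply locally_interval with (a := Finite (- Im (p 1%nat))) (b := p_infty).
  - unfold Dom2 in Hp; cbn; lra.
  - cbn; exact I.
  - intros t Ht _. cbn in Ht.
    rewrite f_imag; unfold upd, Dom2 in *; cbn; [f_equal; ring | lra].
Qed.
End ImaginaryPartsOnly.

Lemma posdef_real_2x2 (a c d p q r s : R) :
  0 < a -> 0 < a * d - c ^ 2 -> (p, q) <> (0, 0) \/ (r, s) <> (0, 0) ->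
  0 < a * (p ^ 2 + q ^ 2) + 2 * c * (p * r + q * s) + d * (r ^ 2 + s ^ 2).
Proof.
  intros Ha Hdet Hv.
  set (Q := a * (p ^ 2 + q ^ 2) + 2 * c * (p * r + q * s) + d * (r ^ 2 + s ^ 2)).
  assert (Hsq : a * Q = (a * p + c * r) ^ 2 + (a * q + c * s) ^ 2
                        + (a * d - c ^ 2) * (r ^ 2 + s ^ 2)) by (unfold Q; ring).
  destruct (Req_dec (r ^ 2 + s ^ 2) 0) as [Hrs | Hrs].
  - assert (r = 0 /\ s = 0) as [-> ->] by (split; nra).
    assert (Hpq : 0 < p ^ 2 + q ^ 2).
    { destruct Hv as [Hv | Hv]; [|congruence].
      destruct (Req_dec p 0) as [-> | Hp], (Req_dec q 0) as [-> | Hq];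
        try congruence; [pose proof (pow2_gt_0 q Hq) | pose proof (pow2_gt_0 p Hp)
        | pose proof (pow2_gt_0 p Hp); pose proof (pow2_ge_0 q)]; lra. }
    unfold Q; nra.
  - assert (0 < r ^ 2 + s ^ 2) by nra.
    apply (Rmult_lt_reg_l a); [exact Ha|]. rewrite Rmult_0_r, Hsq.
    pose proof (pow2_ge_0 (a * p + c * r)); pose proof (pow2_ge_0 (a * q + c * s)).
    pose proof (Rmult_lt_0_compat _ _ Hdet H). lra.
Qed.

Section RealSliceMetric.
Variable F : pt -> nat -> nat -> Cx.
Variable e : nat -> nat -> R -> R -> R.
Variable D : nat -> nat -> nat -> R -> R -> R.
Hypothesis F_real : forall q j k, Dom2 q -> (j < 2)%nat -> (k < 2)%nat ->
  F q j k = mkC (e j k (Im (q 0%nat)) (Im (q 1%nat))) 0.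
Hypothesis D_y : forall j k y b, 0 < b -> (j < 2)%nat -> (k < 2)%nat ->
  is_derive (fun t => e j k (y + t) b) 0 (D 0%nat j k y b).
Hypothesis D_b : forall j k y b, 0 < b -> (j < 2)%nat -> (k < 2)%nat ->
  is_derive (fun t => e j k y (b + t)) 0 (D 1%nat j k y b).
Hypothesis e_sym : forall j k y b, (j < 2)%nat -> (k < 2)%nat -> e j k y b = e k j y b.
Hypothesis D_sym : forall l j k y b, 0 < b -> (l < 2)%nat -> (j < 2)%nat -> (k < 2)%nat ->
  D l j k y b = D l k j y b.
Hypothesis D_closed : forall j k l y b, 0 < b -> (j < 2)%nat -> (k < 2)%nat -> (l < 2)%nat ->
  D l j k y b = D j l k y b.
Hypothesis e_posdef : forall y b, 0 < b ->
  0 < e 0%nat 0%nat y b /\ 0 < e 0%nat 0%nat y b * e 1%nat 1%nat y b - e 0%nat 1%nat y b ^ 2.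

Lemma wirtinger_imag_only (p : pt) (j k l : nat) :
  Dom2 p -> (j < 2)%nat -> (k < 2)%nat -> (l < 2)%nat ->
  is_dw (fun q => F q j k) l p
    (mkC ((0 + 0) / 2) ((0 - D l j k (Im (p 0%nat)) (Im (p 1%nat))) / 2)) /\
  is_dwbar (fun q => F q j k) l p
    (mkC ((0 - 0) / 2) ((0 + D l j k (Im (p 0%nat)) (Im (p 1%nat))) / 2)).
Proof.
  intros Hp Hj Hk Hl.
  assert (HRe : forall q, Dom2 q -> Re (F q j k) = e j k (Im (q 0%nat)) (Im (q 1%nat)))
    by (intros q Hq; rewrite F_real by assumption; reflexivity).
  assert (HIm : forall q, Dom2 q -> Im (F q j k) = (fun _ _ : R => 0) (Im (q 0%nat)) (Im (q 1%nat)))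
    by (intros q Hq; rewrite F_real by assumption; reflexivity).
  assert (Hdy : partial_y (fun q => Re (F q j k)) l p (D l j k (Im (p 0%nat)) (Im (p 1%nat)))
             /\ partial_y (fun q => Im (F q j k)) l p 0).
  { destruct l as [|[|l]]; [| |lia]; split.
    - apply (partial_y0_imag_only _ _ HRe p); auto.
    - apply (partial_y0_imag_only _ _ HIm p); [exact Hp | apply is_derive_const_R].
    - apply (partial_y1_imag_only _ _ HRe p); auto.
    - apply (partial_y1_imag_only _ _ HIm p); [exact Hp | apply is_derive_const_R]. }
  destruct Hdy as [HdRe HdIm].
  split; exists 0, 0, (D l j k (Im (p 0%nat)) (Im (p 1%nat))), 0;
    repeat split; try assumption;
    apply (partial_x_imag_only _ _ HRe) || apply (partial_x_imag_only _ _ HIm); exact Hp.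
Qed.

Lemma slice_hermitian : hermitian_metric 2 Dom2 F.
Proof.
  intros p Hp. split.
  - intros j k Hj Hk. rewrite !F_real, e_sym by assumption.
    unfold Cconj; cbn; f_equal; ring.
  - intros v Hv. cbn [Csum]. rewrite !F_real by (auto; lia).
    rewrite (e_sym 1 0) by lia.
    destruct (e_posdef (Im (p 0%nat)) (Im (p 1%nat)) Hp) as [H00 Hdet].
    assert (Hv' : v 0%nat <> C0 \/ v 1%nat <> C0).
    { destruct Hv as [[|[|j]] [Hj Hj']]; auto; lia. }
    destruct (v 0%nat) as [p0 q0], (v 1%nat) as [r1 s1].
    unfold Cmul, Cadd, Cconj, C0; cbn [Re Im].
    match goal with |- 0 < ?Q =>
      replace Q with (e 0%nat 0%nat (Im (p 0%nat)) (Im (p 1%nat)) * (p0 ^ 2 + q0 ^ 2)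
        + 2 * e 0%nat 1%nat (Im (p 0%nat)) (Im (p 1%nat)) * (p0 * r1 + q0 * s1)
        + e 1%nat 1%nat (Im (p 0%nat)) (Im (p 1%nat)) * (r1 ^ 2 + s1 ^ 2)) by ring end.
    apply posdef_real_2x2; [exact H00 | exact Hdet |].
    unfold C0 in Hv'; destruct Hv' as [Hv' | Hv']; [left | right];
      intros Heq; injection Heq as -> ->; contradiction.
Qed.

(** Both closedness identities reduce to symmetries of D. *)
Lemma slice_closed : form_closed 2 Dom2 F.
Proof.
  intros p Hp j k l Hj Hk Hl. split.
  - do 2 eexists. split; [apply (proj1 (wirtinger_imag_only p j k l Hp Hj Hk Hl))|].
    split; [apply (proj1 (wirtinger_imag_only p l k j Hp Hl Hk Hj))|].
    rewrite D_closed by assumption. reflexivity.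
  - do 2 eexists. split; [apply (proj2 (wirtinger_imag_only p j k l Hp Hj Hk Hl))|].
    split; [apply (proj2 (wirtinger_imag_only p j l k Hp Hj Hl Hk))|].
    rewrite (D_sym l j k), (D_closed k j l), (D_sym k l j) by assumption. reflexivity.
Qed.

Lemma slice_kahler : kahler_metric 2 Dom2 F.
Proof. split; [exact slice_hermitian | exact slice_closed]. Qed.
End RealSliceMetric.

(** Derivatives [D l j k y a] of the entries of h_U on {s = s0}, coordinates
    (z, alpha): only h_{alpha alphabar} = 1/(4 a^2) depends on (y, a) = (Im z, Im alpha). *)
Definition deriv_slice_s (l j k : nat) (y a : R) : R :=
  match l, j, k with
  | S O, S O, S O => - / (2 * (a * a * a))
  | _, _, _ => 0
  end.

Definition deriv_slice_alpha (l j k : nat) (y b : R) : R :=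
  match l, j, k with
  | O, O, S O | O, S O, O => - / (b * b)
  | O, S O, S O => 2 * y / (b * b * b)
  | S O, O, O => - / (b * b)
  | S O, O, S O | S O, S O, O => 2 * y / (b * b * b)
  | S O, S O, S O => - / (2 * (b * b * b)) - 3 * y * y / (b * b * b * b)
  | _, _, _ => 0
  end.

Ltac nonzero := repeat apply Rmult_integral_contrapositive_currified; lra.
Ltac entry_derive := first [ apply is_derive_const_R
  | auto_derive; repeat split; try nonzero; try (field; repeat split; nonzero) ].

(** On {s = s0}: h_U = |dz|^2 / Im s0 + |dalpha|^2 / (4 (Im alpha)^2). *)
Lemma kahler_slice_s (s0 : Cx) : 0 < Im s0 -> kahler_metric 2 Dom2 (restr_s hU s0).
Proof.
  intros Hs0.
  apply (slice_kahler _ (fun j k y a => hU_entry j k y a (Im s0)) deriv_slice_s).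
  - intros q j k Hq Hj Hk. unfold restr_s, idx_s.
    rewrite hU_explicit by (unfold Dom3, calpha, cs, emb_s; cbn; split; assumption).
    reflexivity.
  - intros j k y a Ha Hj Hk. destruct j as [|[|j]], k as [|[|k]]; try lia; cbn; entry_derive.
  - intros j k y a Ha Hj Hk. destruct j as [|[|j]], k as [|[|k]]; try lia; cbn; entry_derive.
  - intros j k y a Hj Hk. destruct j as [|[|j]], k as [|[|k]]; try lia; reflexivity.
  - intros l j k y a Ha Hl Hj Hk.
    destruct l as [|[|l]], j as [|[|j]], k as [|[|k]]; try lia; reflexivity.
  - intros j k l y a Ha Hj Hk Hl.
    destruct l as [|[|l]], j as [|[|j]], k as [|[|k]]; try lia; reflexivity.
  - intros y a Ha. cbn. split; [apply Rinv_0_lt_compat; exact Hs0|].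
    assert (0 < / Im s0) by (apply Rinv_0_lt_compat; exact Hs0).
    assert (0 < / (4 * (a * a))) by (apply Rinv_0_lt_compat; nra). nra.
Qed.

(** On {alpha = alpha0} the determinant of the 2x2 matrix is 1/(4 (Im s)^3). *)
Lemma kahler_slice_alpha (a0 : Cx) : 0 < Im a0 -> kahler_metric 2 Dom2 (restr_alpha hU a0).
Proof.
  intros Ha0.
  apply (slice_kahler _ (fun j k y b => hU_entry (idx_alpha j) (idx_alpha k) y (Im a0) b)
    deriv_slice_alpha).
  - intros q j k Hq Hj Hk. unfold restr_alpha.
    rewrite hU_explicit by (unfold Dom3, calpha, cs, emb_alpha; cbn; split; assumption).
    reflexivity.
  - intros j k y b Hb Hj Hk. destruct j as [|[|j]], k as [|[|k]]; try lia; cbn; entry_derive.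
  - intros j k y b Hb Hj Hk. destruct j as [|[|j]], k as [|[|k]]; try lia; cbn; entry_derive.
  - intros j k y b Hj Hk. destruct j as [|[|j]], k as [|[|k]]; try lia; reflexivity.
  - intros l j k y b Hb Hl Hj Hk.
    destruct l as [|[|l]], j as [|[|j]], k as [|[|k]]; try lia; reflexivity.
  - intros j k l y b Hb Hj Hk Hl.
    destruct l as [|[|l]], j as [|[|j]], k as [|[|k]]; try lia; reflexivity.
  - intros y b Hb. cbn. split; [apply Rinv_0_lt_compat; exact Hb|].
    match goal with |- 0 < ?E => replace E with (/ (4 * (b * b * b))) by (field; lra) end.
    apply Rinv_0_lt_compat; repeat apply Rmult_lt_0_compat; lra.
Qed.

Theorem mainTheorem1 :
  (* restriction of h_U to {s = s0} is Kähler *)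
  (forall s0 : Cx, 0 < Im s0 -> kahler_metric 2 Dom2 (restr_s hU s0)) /\
  (* restriction of h_U to {alpha = alpha0} is Kähler *)
  (forall a0 : Cx, 0 < Im a0 -> kahler_metric 2 Dom2 (restr_alpha hU a0)) /\
  (* h_U is G~-invariant (so everything descends to the quotient) *)
  (forall (n m : Z) (p : pt), Dom3 p ->
     Dom3 (gact n m p) /\
     forall j k, (j < 3)%nat -> (k < 3)%nat -> pullback_g n m hU p j k = hU p j k).
Proof.
  split; [exact kahler_slice_s|].
  split; [exact kahler_slice_alpha|].
  exact hU_lattice_invariant.
Qed.
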